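(* Every tree of diameter $5$ is odd-graceful.
   Context: A graph $G$ with $n$ edges is odd-graceful if there is an injective map $f:V(G)\to\{0,1,2,\dots,2n-1\}$ such that the set of induced edge weights $\{|f(x)-f(y)| : xy\in E(G)\}$ equals $\{1,3,5,\dots,2n-1\}$. *)

From mathcomp Require Import all_boot.
Set Implicit Arguments. Unset Strict Implicit. Unset Printing Implicit Defensive.

Definition simple_graph (T : finType) (e : rel T) : Prop :=
  irreflexive e /\ symmetric e.

Definition edges (T : finType) (e : rel T) : {set {set T}} :=
  [set [set x; y] | x in T, y in T & e x y].

Definition walk_len (T : finType) (e : rel T) (x y : T) (k : nat) : Prop :=
  exists p : seq T, [/\ path e x p, last x p = y & size p = k].

Definition dist_is (T : finType) (e : rel T) (x y : T) (d : nat) : Prop :=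
  walk_len e x y d /\ forall k, walk_len e x y k -> d <= k.

Definition connected_graph (T : finType) (e : rel T) : Prop :=
  forall x y : T, exists k, walk_len e x y k.

Definition is_tree (T : finType) (e : rel T) : Prop :=
  [/\ simple_graph e, 0 < #|T|, connected_graph e & #|edges e| = #|T| - 1].

Definition diameter_is (T : finType) (e : rel T) (d : nat) : Prop :=
  connected_graph e /\
  (forall x y k, dist_is e x y k -> k <= d) /\
  (exists x y, dist_is e x y d).

Definition odd_graceful (T : finType) (e : rel T) : Prop :=
  exists f : T -> nat,
    [/\ injective f,
        (forall x, f x < 2 * #|edges e|) &
        (forall k, (exists x y, e x y /\ maxn (f x) (f y) - minn (f x) (f y) = k) <->
                   (odd k /\ k < 2 * #|edges e|))].

(* Root the tree at the vertex u of a longest path a..b with d(a, u) = 2 and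
   d(u, b) = 3, and let v be the neighbour of u towards b.  Two vertices in
   different subtrees of u are at distance at least the sum of their depths, so
   every vertex has depth at most 3 and every vertex of depth 3 lies below v:
   the tree is u and v together with their children and grandchildren.
   Rank the vertices other than u by 0 .. n-1 and give the edge from z to its
   parent the weight 2 rk z + 1.  This is achieved by the labels
     v |-> 0,   u |-> 2 rk v + 1,
     child y of v |-> 2 rk y + 1,    its child w |-> 2 (rk y - rk w),
     child x <> v of u |-> 2 (rk v - rk x),   its child w |-> 2 (rk v - rk x + rk w) + 1,
   provided the ranks list the grandchildren below v, then the other
   grandchildren, the other children of u, v, and the children of v, each
   family of siblings consecutively and the families in the reverse order of
   their parents.  Along the ranks the even labels then decrease and the odd
   ones increase (placing u at the rank of v), so the labels are distinct. *)

From mathcomp Require Import all_boot zify.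
Set Implicit Arguments. Unset Strict Implicit. Unset Printing Implicit Defensive.

Section Rank.
Variables (T : finType) (S : {set T}) (key : T -> nat).
Hypothesis key_inj : {in S &, injective key}.

Definition rank z := #|[set y in S | key y < key z]|.

Lemma rank_lt_card z : z \in S -> rank z < #|S|.
Proof.
move=> zS; apply: proper_card; apply/properP; split.
- by apply/subsetP => y; rewrite inE => /andP[].
- by exists z; rewrite // inE ltnn andbF.
Qed.

Lemma rank_mono y z : y \in S -> key y < key z -> rank y < rank z.
Proof.
move=> yS lt_yz; apply: proper_card; apply/properP; split.
- apply/subsetP => x; rewrite !inE => /andP[-> lt_xy] /=; exact: ltn_trans lt_xy lt_yz.
- by exists y; rewrite !inE ?yS ?lt_yz // ltnn andbF.
Qed.

Lemma rank_ltE : {in S &, forall y z, (rank y < rank z) = (key y < key z)}.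
Proof.
move=> y z yS zS; apply/idP/idP => [lt_r|]; last exact: rank_mono.
case: (ltngtP (key y) (key z)) => // [gt_k | /key_inj eq_yz].
- by have := rank_mono zS gt_k; rewrite ltnNge (ltnW lt_r).
- by move: lt_r; rewrite eq_yz // ltnn.
Qed.

Lemma rank_inj : {in S &, injective rank}.
Proof.
move=> y z yS zS eq_r; apply: (key_inj yS zS).
have [lt_k | gt_k | //] := ltngtP (key y) (key z).
- by move: lt_k; rewrite -(rank_ltE yS zS) eq_r ltnn.
- by move: gt_k; rewrite -(rank_ltE zS yS) eq_r ltnn.
Qed.

Lemma rank_onto m : m < #|S| -> exists2 z, z \in S & rank z = m.
Proof.
move=> lt_m.
have uniq_r : uniq [seq rank z | z <- enum S].
  by rewrite map_inj_in_uniq ?enum_uniq // => y z; rewrite !mem_enum; apply: rank_inj.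
have sub_r : {subset [seq rank z | z <- enum S] <= iota 0 #|S|}.
  by move=> r /mapP[z]; rewrite mem_enum => zS ->; rewrite mem_iota rank_lt_card.
have size_r : size (iota 0 #|S|) <= size [seq rank z | z <- enum S].
  by rewrite size_iota size_map -cardE.
have [_ eq_r] := uniq_min_size uniq_r sub_r size_r.
have : m \in iota 0 #|S| by rewrite mem_iota.
by rewrite -eq_r => /mapP[z]; rewrite mem_enum => zS ->; exists z.
Qed.

End Rank.

Definition code (M c a b : nat) := (c * M + a) * M + b.

Lemma code_ltE M c a b c' a' b' : a < M -> b < M -> a' < M -> b' < M ->
  (code M c a b < code M c' a' b') =
  (c < c') || (c == c') && ((a < a') || (a == a') && (b < b')).
Proof. rewrite /code; nia. Qed.

Lemma code_inj M c a b c' a' b' : a < M -> b < M -> a' < M -> b' < M ->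
  code M c a b = code M c' a' b' -> [/\ c = c', a = a' & b = b'].
Proof.
move=> lt_a lt_b lt_a' lt_b' eq_code.
have := code_ltE c c' lt_a lt_b lt_a' lt_b'.
have := code_ltE c' c lt_a' lt_b' lt_a lt_b.
by rewrite eq_code ltnn; split; lia.
Qed.

Section ParentLabelling.
Variables (T : finType) (e : rel T) (u : T) (parent : T -> T).
Hypothesis parent_edge : forall z, z != u -> e z (parent z).
Hypothesis edge_parent :
  forall x y, e x y -> (x != u /\ y = parent x) \/ (y != u /\ x = parent y).

Lemma odd_graceful_of_parent_weights (f rk : T -> nat) :
  injective f -> (forall z, f z < 2 * #|edges e|) ->
  (forall z, z != u -> rk z < #|edges e|) ->
  (forall m, m < #|edges e| -> exists2 z, z != u & rk z = m) ->
  (forall z, z != u ->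
    maxn (f z) (f (parent z)) - minn (f z) (f (parent z)) = (2 * rk z).+1) ->
  odd_graceful e.
Proof.
move=> f_inj f_lt rk_lt rk_onto weight; exists f.
(* Identifies the differently elaborated copies of #|edges e| for lia. *)
set n := #|edges e| in f_lt rk_lt rk_onto *; split=> // k; split.
- move=> [x [y [exy <-]]].
  have [[xu ->] | [yu ->]] := edge_parent exy; last rewrite maxnC minnC.
  + by rewrite weight //= oddM; split=> //; have := rk_lt x xu; lia.
  + by rewrite weight //= oddM; split=> //; have := rk_lt y yu; lia.
- move=> [odd_k lt_k]; have := odd_double_half k; rewrite odd_k -muln2 => def_k.
  have [z zu rk_z] : exists2 z, z != u & rk z = k./2 by apply: rk_onto; lia.
  by exists z, (parent z); rewrite parent_edge // weight // rk_z; split=> //; lia.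
Qed.

End ParentLabelling.

Section Walks.
Variables (T : finType) (e : rel T).

Lemma walk_len0 x : walk_len e x x 0.
Proof. by exists [::]. Qed.

Lemma walk_len_cons x z y k : e x z -> walk_len e z y k -> walk_len e x y k.+1.
Proof. by move=> exz [p [pp lp sp]]; exists (z :: p); rewrite /= exz sp. Qed.

Lemma walk_len_cat x y z k1 k2 :
  walk_len e x y k1 -> walk_len e y z k2 -> walk_len e x z (k1 + k2).
Proof.
move=> [p [pp lp sp]] [q [pq lq sq]]; exists (p ++ q).
by rewrite cat_path last_cat size_cat lp pp pq sp sq.
Qed.

Lemma walk_len_split x y m n :
  walk_len e x y (m + n) -> exists z, walk_len e x z m /\ walk_len e z y n.
Proof.
move=> [p [pp lp sp]]; set z := last x (take m p).
have /andP[pt pd] : path e x (take m p) && path e z (drop m p).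
  by rewrite -cat_path cat_take_drop.
have ld : last z (drop m p) = y by rewrite -last_cat cat_take_drop.
exists z; split; [exists (take m p) | exists (drop m p)]; split=> //.
- by rewrite size_takel // sp leq_addr.
- by rewrite size_drop sp addKn.
Qed.

Definition walkb x y k := [exists t : k.-tuple T, path e x t && (last x t == y)].

Lemma walk_lenP x y k : reflect (walk_len e x y k) (walkb x y k).
Proof.
apply: (iffP existsP) => [[t /andP[pt /eqP lt]] | [p [pp lp sp]]].
- by exists t; rewrite size_tuple.
- have sz : size p == k by rewrite sp.
  by exists (Tuple sz); rewrite /= pp lp eqxx.
Qed.

Hypothesis e_sym : symmetric e.

Lemma walk_len_rev x y k : walk_len e x y k -> walk_len e y x k.
Proof.
move=> [p]; elim: p x k => [|z p IHp] x k [pp lp sp] /=.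
  by move: lp sp => /= -> <-; apply: walk_len0.
move: pp => /= /andP[exz pp]; rewrite -sp /= -addn1.
apply: walk_len_cat (IHp z _ (And3 pp lp erefl)) _.
by apply: walk_len_cons (walk_len0 x); rewrite e_sym.
Qed.

End Walks.

Section RootedTree.
Variables (T : finType) (e : rel T).
Hypotheses (e_sym : symmetric e) (e_conn : connected_graph e).

Lemma walkb_exists x y : exists k, walkb e x y k.
Proof. by have [k w] := e_conn x y; exists k; apply/walk_lenP. Qed.

Lemma dist_exists x y : exists k, dist_is e x y k.
Proof.
exists (ex_minn (walkb_exists x y)); case: ex_minnP => m /walk_lenP w_m min_m.
by split=> // k /walk_lenP /min_m.
Qed.

Variable u : T.

Definition depth z := ex_minn (walkb_exists z u).

Lemma depth_walk z : walk_len e z u (depth z).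
Proof. by rewrite /depth; case: ex_minnP => m /walk_lenP. Qed.

Lemma depth_min z k : walk_len e z u k -> depth z <= k.
Proof. by rewrite /depth; case: ex_minnP => m _ min_m /walk_lenP /min_m. Qed.

Lemma depth_root : depth u = 0.
Proof. by apply/eqP; rewrite -leqn0; apply/depth_min/walk_len0. Qed.

Lemma depth_gt0 z : (0 < depth z) = (z != u).
Proof.
apply/idP/idP => [|zu].
  by apply: contraTneq => ->; rewrite depth_root.
have [[|w p] [_ lp sp]] := depth_walk z; first by rewrite -lp eqxx in zu.
by rewrite -sp.
Qed.

Definition parent z :=
  if [pick w | e z w && ((depth w).+1 == depth z)] is Some w then w else z.

Lemma parentP z : z != u -> e z (parent z) /\ (depth (parent z)).+1 = depth z.
Proof.
move=> zu; rewrite /parent; case: pickP => [w /andP[ezw /eqP] // | no_parent].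
have [[|w p] [pp lp sp]] := depth_walk z; first by rewrite -lp eqxx in zu.
move: pp => /= /andP[ezw pw].
have le_w : depth w <= size p by apply: depth_min; exists p.
have le_z : depth z <= (depth w).+1 by apply/depth_min/walk_len_cons/depth_walk.
suff: (depth w).+1 == depth z by rewrite -[_ == _]andTb -ezw no_parent.
by apply/eqP; rewrite -sp /= in le_z *; lia.
Qed.

Lemma depth_parent z : z != u -> (depth (parent z)).+1 = depth z.
Proof. by case/parentP. Qed.

Lemma depth_iter_parent z j : j <= depth z -> depth (iter j parent z) = depth z - j.
Proof.
elim: j => [|j IHj] le_j /=; first by rewrite subn0.
have d_j := IHj (ltnW le_j).
have zj : iter j parent z != u by rewrite -depth_gt0 d_j subn_gt0.
by have := depth_parent zj; rewrite d_j; lia.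
Qed.

Lemma walk_iter_parent z j : j <= depth z -> walk_len e z (iter j parent z) j.
Proof.
elim: j => [|j IHj] le_j /=; first exact: walk_len0.
have zj : iter j parent z != u.
  by rewrite -depth_gt0 depth_iter_parent ?subn_gt0 // ltnW.
rewrite -addn1; apply: walk_len_cat (IHj (ltnW le_j)) _.
exact/walk_len_cons/walk_len0/(parentP zj).1.
Qed.

Hypotheses (e_irr : irreflexive e) (card_edges : #|edges e| = #|T| - 1).

(* The |T| - 1 parent edges are distinct, so they are all the edges. *)
Lemma edge_parent x y :
  e x y -> (x != u /\ y = parent x) \/ (y != u /\ x = parent y).
Proof.
move=> exy; pose pedge z := [set z; parent z].
have pedge_inj : {in [set~ u] &, injective pedge}.
  move=> z z'; rewrite !in_setC1 => zu z'u eq_z.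
  have: z \in pedge z' by rewrite -eq_z !inE eqxx.
  have: z' \in pedge z by rewrite eq_z !inE eqxx.
  rewrite !inE => /orP[/eqP -> // | /eqP pz] /orP[/eqP -> // | /eqP pz'].
  by have := depth_parent zu; have := depth_parent z'u; rewrite -pz -pz'; lia.
have sub_edges : pedge @: [set~ u] \subset edges e.
  apply/subsetP => E /imsetP[z]; rewrite in_setC1 => zu ->.
  by apply/imset2P; exists z (parent z); rewrite ?inE ?(parentP zu).1.
have eq_edges : pedge @: [set~ u] = edges e.
  by apply/eqP; rewrite eqEcard sub_edges card_in_imset // cardsC1 card_edges subn1 leqnn.
have : [set x; y] \in edges e by apply/imset2P; exists x y; rewrite ?inE.
rewrite -eq_edges => /imsetP[z]; rewrite in_setC1 => zu eq_xy.
have neq_xy : x != y by apply: contraTneq exy => ->; rewrite e_irr.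
have : x \in pedge z by rewrite -eq_xy !inE eqxx.
have : y \in pedge z by rewrite -eq_xy !inE eqxx orbT.
rewrite !inE => /orP[] /eqP eq_y /orP[] /eqP eq_x; rewrite eq_x eq_y ?eqxx in neq_xy *.
all: by [left | right].
Qed.

(* The ancestor of z at depth 1; it identifies the subtree of u containing z. *)
Definition branch z := iter (depth z).-1 parent z.

Lemma branch_parent z : 1 < depth z -> branch (parent z) = branch z.
Proof.
move=> gt1_z; have zu : z != u by rewrite -depth_gt0 ltnW.
rewrite /branch -(depth_parent zu) /=; move: gt1_z; rewrite -(depth_parent zu).
by case: (depth (parent z)) => // k _; rewrite iterSr.
Qed.

Lemma branch_path x p : path e x p -> u \notin x :: p -> branch (last x p) = branch x.
Proof.
elim: p x => [|y p IHp] x //= /andP[exy pp].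
rewrite in_cons negb_or => /andP[xu yp]; rewrite IHp //.
have yu : y != u by move: yp; rewrite in_cons negb_or eq_sym => /andP[].
rewrite eq_sym in xu.
have [[_ eq_y] | [_ eq_x]] := edge_parent exy.
  by rewrite eq_y branch_parent // -(depth_parent xu) ltnS depth_gt0 -eq_y.
by rewrite eq_x branch_parent // -(depth_parent yu) ltnS depth_gt0 -eq_x.
Qed.

(* A walk between different branches must pass through the root. *)
Lemma branch_walk_ge x y k :
  branch x != branch y -> walk_len e x y k -> depth x + depth y <= k.
Proof.
move=> neq_b [p [pp lp sp]].
have [u_p | /(branch_path pp)] := boolP (u \in x :: p); last first.
  by rewrite lp => eq_b; rewrite eq_b eqxx in neq_b.
rewrite in_cons in u_p; case/orP: u_p => [/eqP ux | u_p].
  by subst x; rewrite depth_root; apply/depth_min/(walk_len_rev e_sym); exists p.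
move: pp lp sp; case/splitPr: u_p => p1 p2.
rewrite cat_path last_cat size_cat /= => /and3P[pp1 eu pp2] lp2 sp.
have d_x : depth x <= (size p1).+1.
  by apply: depth_min; exists (rcons p1 u); rewrite rcons_path last_rcons size_rcons pp1.
have d_y : depth y <= size p2 by apply/depth_min/(walk_len_rev e_sym); exists p2.
by rewrite -sp addnS -addSn leq_add.
Qed.

Section Diameter5.
Variables a b : T.
Hypothesis diameter5 : forall x y k, dist_is e x y k -> k <= 5.
Hypothesis dist_ab : dist_is e a b 5.
Hypotheses (walk_au : walk_len e a u 2) (walk_ub : walk_len e u b 3).

Lemma diameter5_ends : [/\ depth a = 2, depth b = 3 & branch a != branch b].
Proof.
have [_ min_ab] := dist_ab.
have le_a : depth a <= 2 by apply: depth_min.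
have le_b : depth b <= 3 by apply/depth_min/(walk_len_rev e_sym).
have ge5 := min_ab _ (walk_len_cat (depth_walk a) (walk_len_rev e_sym (depth_walk b))).
have d_a : depth a = 2 by lia.
have d_b : depth b = 3 by lia.
split=> //; apply/negP => /eqP eq_b.
have w_a : walk_len e a (branch a) 1.
  by rewrite /branch d_a; apply: walk_iter_parent; rewrite d_a.
have w_b : walk_len e b (branch a) 2.
  by rewrite eq_b /branch d_b; apply: walk_iter_parent; rewrite d_b.
by have := min_ab _ (walk_len_cat w_a (walk_len_rev e_sym w_b)).
Qed.

Lemma diameter5_shape : [/\ depth (branch b) = 1, forall z, depth z <= 3 &
  forall z, depth z = 3 -> parent (parent z) = branch b].
Proof.
have [d_a d_b neq_ab] := diameter5_ends.
have near c z : exists2 k, k <= 5 & walk_len e z c k.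
  have [k dist_zc] := dist_exists z c.
  by exists k; [apply: diameter5 dist_zc | case: dist_zc].
have shape z : depth z <= 3 /\ (depth z = 3 -> branch z = branch b).
  have [k1 le1 w1] := near a z; have [k2 le2 w2] := near b z.
  have [eq_za | neq_za] := eqVneq (branch z) (branch a).
    have : branch z != branch b by rewrite eq_za.
    by move/branch_walk_ge/(_ w2); lia.
  have := branch_walk_ge neq_za w1; split; first lia.
  by move=> d3; case: (eqVneq (branch z) (branch b)) => // /branch_walk_ge/(_ w2); lia.
split.
- by rewrite /branch depth_iter_parent ?leq_pred // d_b.
- by move=> z; case: (shape z).
- by move=> z d3; rewrite -(shape z).2 // /branch d3.
Qed.

End Diameter5.

Section DoubleBroom.
Variable v : T.
Hypotheses (depth_v : depth v = 1) (depth_le3 : forall z, depth z <= 3).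
Hypothesis grandparent_v : forall z, depth z = 3 -> parent (parent z) = v.

(* Every vertex is u, v, a child or grandchild of v, or a child or grandchild of u
   not below v.  The kinds are numbered in increasing order of rank. *)
Definition kind z :=
  if z == u then 5 else if depth z == 3 then 0
  else if depth z == 2 then (if parent z == v then 4 else 1)
  else if z == v then 3 else 2.

Variant kind_spec z : nat -> Prop :=
  | KindVgrand of depth z = 3 : kind_spec z 0
  | KindUgrand of depth z = 2 & parent z != v : kind_spec z 1
  | KindUchild of depth z = 1 & z != v : kind_spec z 2
  | KindHub of z = v : kind_spec z 3
  | KindVchild of depth z = 2 & parent z = v : kind_spec z 4
  | KindRoot of z = u : kind_spec z 5.

Lemma kindP z : kind_spec z (kind z).
Proof.
rewrite /kind; have [->|zu] := eqVneq z u; first exact: KindRoot.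
have := depth_le3 z; rewrite -depth_gt0 in zu => le3.
case: eqP => [d3 | n3]; first exact: KindVgrand.
case: eqP => [d2 | n2]; first by case: eqP => [pv | /eqP pv]; constructor.
case: eqP => [-> | /eqP zv]; first exact: KindHub.
by constructor => //; lia.
Qed.

Lemma kind_lt5 z : (kind z < 5) = (z != u).
Proof. by rewrite /kind; case: eqVneq => //= _; do 3?case: ifP. Qed.

Lemma kind_root : kind u = 5.
Proof. by rewrite /kind eqxx. Qed.

Lemma hub_neq_root : v != u.
Proof. by rewrite -depth_gt0 depth_v. Qed.

Lemma kind_hub : kind v = 3.
Proof. by rewrite /kind (negPf hub_neq_root) depth_v eqxx. Qed.

Lemma parent_depth1 z : depth z = 1 -> parent z = u.
Proof.
move=> d1; have zu : z != u by rewrite -depth_gt0 d1.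
by apply/eqP; rewrite -[_ == _]negbK -depth_gt0 -ltnS (depth_parent zu) d1.
Qed.

Lemma kind_parent z : z != u ->
  kind (parent z) = match kind z with 0 => 4 | 1 => 2 | 4 => 3 | _ => 5 end.
Proof.
move=> zu; have d_p : depth (parent z) = (depth z).-1 by rewrite -(depth_parent zu).
have pu : 1 < depth z -> parent z != u by rewrite -depth_gt0 d_p; lia.
case: (kindP z) => [d3 | d2 pv | d1 _ | -> | d2 -> | zu'].
- by rewrite /kind (negPf (pu _)) ?d3 // d_p d3 grandparent_v ?eqxx.
- by rewrite /kind (negPf (pu _)) ?d2 // d_p d2 (negPf pv).
- by rewrite parent_depth1 // kind_root.
- by rewrite parent_depth1 // kind_root.
- by rewrite kind_hub.
- by rewrite zu' eqxx in zu.
Qed.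

Definition idx (z : T) : nat := enum_rank z.

Lemma idx_lt z : idx z < #|T|.
Proof. exact: ltn_ord. Qed.

Lemma idx_inj : injective idx.
Proof. by move=> y z /ord_inj/enum_rank_inj. Qed.

(* Ranks increase with the kind.  Children of one vertex get consecutive ranks,
   and the blocks of children come in the reverse order of their parents. *)
Definition major z := if kind z <= 1 then idx (parent z) else #|T|.-1 - idx z.
Definition minor z := if kind z <= 1 then idx z else 0.
Definition key z := code #|T| (kind z) (major z) (minor z).

Lemma major_lt z : major z < #|T|.
Proof. by rewrite /major; case: ifP => _; [apply: idx_lt | have := idx_lt z; lia]. Qed.

Lemma minor_lt z : minor z < #|T|.
Proof. by rewrite /minor; case: ifP => _; [apply: idx_lt | have := idx_lt z; lia]. Qed.

Lemma key_inj : injective key.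
Proof.
move=> y z eq_key.
have [ek] := code_inj (major_lt y) (minor_lt y) (major_lt z) (minor_lt z) eq_key.
rewrite /major /minor -ek; case: ifP => _ eq_major eq_minor; apply: idx_inj => //.
by have := idx_lt y; have := idx_lt z; lia.
Qed.

Lemma key_kind_lt y z : kind y < kind z -> key y < key z.
Proof. by move=> lt_k; rewrite /key code_ltE ?major_lt ?minor_lt ?lt_k. Qed.

Lemma key_rev y z : 1 < kind y -> kind y = kind z ->
  (key y < key z) = (idx z < idx y).
Proof.
move=> gt1 ek; have le1 : (kind y <= 1) = false by rewrite leqNgt gt1.
rewrite /key code_ltE ?major_lt ?minor_lt // /major /minor -ek le1.
rewrite ltnn eqxx ltnn andbF orbF.
by have := idx_lt y; have := idx_lt z; lia.
Qed.

Lemma key_block y z : kind y <= 1 -> kind y = kind z -> key y < key z ->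
  idx (parent y) <= idx (parent z).
Proof.
move=> le1 ek; rewrite /key code_ltE ?major_lt ?minor_lt // /major /minor -ek le1.
by rewrite ltnn eqxx /=; lia.
Qed.

Definition rk := rank [set~ u] key.

Lemma rk_ltE y z : y != u -> z != u -> (rk y < rk z) = (key y < key z).
Proof. by move=> yu zu; rewrite (rank_ltE (in2W key_inj)) ?in_setC1. Qed.

Lemma rk_inj y z : y != u -> z != u -> rk y = rk z -> y = z.
Proof. by move=> yu zu /(rank_inj (in2W key_inj)); apply; rewrite in_setC1. Qed.

Lemma rk_lt z : z != u -> rk z < #|edges e|.
Proof.
by move=> zu; rewrite card_edges subn1 -(cardsC1 u) rank_lt_card ?in_setC1.
Qed.

Lemma rk_onto m : m < #|edges e| -> exists2 z, z != u & rk z = m.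
Proof.
rewrite card_edges subn1 -(cardsC1 u) => /(rank_onto (in2W key_inj))[z].
by rewrite in_setC1; exists z.
Qed.

Lemma rk_kind_lt y z : kind y < kind z -> kind z < 5 -> rk y < rk z.
Proof.
move=> lt_k lt5; rewrite rk_ltE ?key_kind_lt // -kind_lt5 //.
exact: ltn_trans lt_k lt5.
Qed.

Lemma rk_parent_anti y z : kind y = kind z -> kind y <= 1 -> rk y < rk z ->
  rk (parent z) <= rk (parent y).
Proof.
move=> ek le1 lt_W.
have yu : y != u by rewrite -kind_lt5; apply: leq_ltn_trans le1 _.
have zu : z != u by rewrite -kind_lt5 -ek; apply: leq_ltn_trans le1 _.
have le_p : idx (parent y) <= idx (parent z).
  by apply: key_block le1 ek _; rewrite -rk_ltE.
have [-> // | neq_p] := eqVneq (parent y) (parent z).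
have [ek_p gt1_p lt5_p] :
    [/\ kind (parent y) = kind (parent z), 1 < kind (parent y) & kind (parent y) < 5].
  by rewrite !kind_parent // -ek; move: le1; case: (kind y) => [|[]].
apply: ltnW; rewrite rk_ltE -?kind_lt5 -?ek_p // key_rev -?ek_p //.
by rewrite ltn_neqAle le_p andbT (inj_eq idx_inj).
Qed.

Definition label z :=
  match kind z with
  | 0 => 2 * (rk (parent z) - rk z)
  | 1 => (2 * (rk v - rk (parent z) + rk z)).+1
  | 2 => 2 * (rk v - rk z)
  | 3 => 0
  | 4 => (2 * rk z).+1
  | _ => (2 * rk v).+1
  end.

Variant label_spec z : nat -> nat -> Prop :=
  | LabelVgrand of rk z < rk (parent z) & rk v < rk (parent z) &
      rk (parent z) < #|edges e| : label_spec z 0 (2 * (rk (parent z) - rk z))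
  | LabelUgrand of rk z < rk (parent z) & rk (parent z) < rk v :
      label_spec z 1 (2 * (rk v - rk (parent z) + rk z)).+1
  | LabelUchild of rk z < rk v : label_spec z 2 (2 * (rk v - rk z))
  | LabelHub of rk z = rk v : label_spec z 3 0
  | LabelVchild of rk v < rk z & rk z < #|edges e| : label_spec z 4 (2 * rk z).+1.

Lemma labelP z : z != u -> label_spec z (kind z) (label z).
Proof.
move=> zu; have k_p := kind_parent zu.
rewrite /label; case ek: _ / (kindP z) => [_ | _ _ | _ _ | -> | _ _ | zu'].
- have rk_p : forall y, kind y < 4 -> rk y < rk (parent z).
    by move=> y lt_y; apply: rk_kind_lt; rewrite k_p ek.
  constructor; rewrite ?rk_p ?ek ?kind_hub //.
  by apply: rk_lt; rewrite -kind_lt5 k_p ek.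
- by constructor; apply: rk_kind_lt; rewrite ?k_p ?kind_hub ?ek.
- by constructor; apply: rk_kind_lt; rewrite ?kind_hub ?ek.
- by constructor.
- by constructor; [apply: rk_kind_lt; rewrite ?kind_hub ?ek | apply: rk_lt].
- by rewrite zu' eqxx in zu.
Qed.

Lemma label_root : label u = (2 * rk v).+1.
Proof. by rewrite /label kind_root. Qed.

Lemma label_parent z : z != u ->
  label (parent z) = match kind z with
                     | 0 => (2 * rk (parent z)).+1
                     | 1 => 2 * (rk v - rk (parent z))
                     | 4 => 0
                     | _ => (2 * rk v).+1
                     end.
Proof. by move=> zu; rewrite /label kind_parent //; case: (kind z) => [|[|[|[|[]]]]]. Qed.

Lemma label_parent_weight z : z != u ->
  maxn (label z) (label (parent z)) - minn (label z) (label (parent z)) = (2 * rk z).+1.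
Proof. by move=> zu; rewrite label_parent //; case: (labelP zu) => *; lia. Qed.

Lemma label_lt z : label z < 2 * #|edges e|.
Proof.
have lt_v := rk_lt hub_neq_root.
have [-> | zu] := eqVneq z u; first by rewrite label_root; lia.
by case: (labelP zu) => *; lia.
Qed.

Lemma label_neq_root z : z != u -> label z != label u.
Proof. by move=> zu; rewrite label_root; case: (labelP zu) => *; lia. Qed.

Lemma label_neq y z : y != u -> z != u -> rk y < rk z -> label y != label z.
Proof.
move=> yu zu lt_W.
have kind_le : kind z < kind y -> rk z < rk y.
  by move=> lt_k; apply: rk_kind_lt; rewrite // kind_lt5.
move: kind_le (@rk_parent_anti y z) lt_W.
by case: (labelP yu); case: (labelP zu); lia.
Qed.

Lemma label_inj : injective label.
Proof.
move=> y z; apply: contra_eq.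
have [-> | yu] := eqVneq y u.
  by rewrite eq_sym => zu; rewrite eq_sym label_neq_root.
have [-> _ | zu neq_yz] := eqVneq z u; first exact: label_neq_root.
have [lt_W | gt_W | /(rk_inj yu zu) eq_yz] := ltngtP (rk y) (rk z).
- exact: label_neq.
- by rewrite eq_sym label_neq.
- by rewrite eq_yz eqxx in neq_yz.
Qed.

Lemma double_broom_odd_graceful : odd_graceful e.
Proof.
apply: (odd_graceful_of_parent_weights (u := u) (parent := parent) _ edge_parent label_inj
  label_lt rk_lt rk_onto label_parent_weight).
by move=> z /parentP[].
Qed.

End DoubleBroom.

End RootedTree.

Theorem theorem4 (T : finType) (e : rel T) :
  is_tree e -> diameter_is e 5 -> odd_graceful e.
Proof.
move=> [[e_irr e_sym] _ e_conn card_edges] [_ [diameter5 [a [b dist_ab]]]].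
have [u [walk_au walk_ub]] := walk_len_split (dist_ab.1 : walk_len e a b (2 + 3)).
have [depth_hub depth_le3 grandparent_hub] :=
  diameter5_shape e_sym e_conn e_irr card_edges diameter5 dist_ab walk_au walk_ub.
exact: double_broom_odd_graceful depth_hub depth_le3 grandparent_hub.
Qed.
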